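(* Let $r\in(0,1]$ and $a\ge0$. Then for $x>0$, \[ \lim_{t\to\infty} t\,\rho(tx;r,t,a)=\rho(x;r), \] i.e. $\lim_{t\to\infty}\rho(y;r,t,a)\,dy\big|_{y=tx}=\rho(x;r)\,dx$, where \[ \rho(x;r)=\frac{\sqrt{(x-(1-\sqrt r)^2)((1+\sqrt r)^2-x)}}{2\pi r x}\,\mathbf 1_{((1-\sqrt r)^2,(1+\sqrt r)^2)}(x) \] is the Marcenko--Pastur density.
   Context: The three-parametric MP density $\rho(x;r,t,a)$ ($r\in(0,1]$, $t>0$, $a\ge0$) is the density of the weak limit, as $N,M\to\infty$ with $N/M\to r$, of $\frac1N\sum_{j}\delta_{X^N_j(t)/M}$, where $X^N_j$ solve $dX^N_j=2\sqrt{X^N_j}dB_j+2(M-N+1)dt+4X^N_j\sum_{k\neq j}\frac{dt}{X^N_j-X^N_k}$ with independent standard Brownian motions $B_j$ and $X^N_j(0)=aM$; equivalently its Stieltjes transform $G$ solves $z=\frac1G+\frac{t}{1-rtG}+\frac{a}{(1-rtG)^2}$, and $\rho(x)=-\frac1\pi\lim_{\varepsilon\to0}\Im G(x+i\varepsilon)$. *)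

From HB Require Import structures.
From mathcomp Require Import all_boot all_order all_algebra.
From mathcomp Require Import all_classical all_reals all_analysis.
From mathcomp Require Import complex.
Set Implicit Arguments. Unset Strict Implicit. Unset Printing Implicit Defensive.
Import Order.TTheory GRing.Theory Num.Theory.
Import numFieldNormedType.Exports.
Local Open Scope classical_set_scope.
Local Open Scope ring_scope.
Local Open Scope complex_scope.

Definition stieltjes (R : realType) (mu : probability R R) (z : R[i]) : R[i] :=
  (\int[mu]_(y in setT) complex.Re ((z - y%:C)^-1))%R
  +i* (\int[mu]_(y in setT) complex.Im ((z - y%:C)^-1))%R.

Definition MP3_stieltjes (R : realType) (r t a : R) (G : R[i] -> R[i]) : Prop :=
  exists mu : probability R R,
    forall z : R[i], 0 < complex.Im z ->
      G z = stieltjes mu z /\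
      z = (G z)^-1 + t%:C / (1 - (r * t)%:C * G z)
          + a%:C / (1 - (r * t)%:C * G z) ^+ 2.

Definition mp_density (R : realType) (r x : R) : R :=
  if ((1 - Num.sqrt r) ^+ 2 < x) && (x < (1 + Num.sqrt r) ^+ 2) then
    Num.sqrt ((x - (1 - Num.sqrt r) ^+ 2) * ((1 + Num.sqrt r) ^+ 2 - x))
      / (2 * pi * r * x)
  else 0.

(* Put g = t G(t x + i e), s = 1 - r g and d = a / t.  The equation for G becomes
   (x + i e/t) g s^2 = s^2 + g s + d g, whose e = 0 version is a real cubic in g.
   The cubic has a real root (1 + sg)/r with d/2 <= sg <= 3d/2 (intermediate value
   theorem), and its other factor is a quadratic whose complex roots have imaginary
   parts +-root_im d sg.  A Stieltjes transform satisfies Im z |G z|^2 <= -Im (G z)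
   (Cauchy-Schwarz); this bounds |g| and keeps g at distance >= |s|/(4r) from the
   real root, so the quadratic factor is O(e/t) at g and (Im g)^2 = root_im^2 + O(e/t).
   Letting e -> 0 gives t rho(t x) = root_im d sg / pi, and as t -> oo (so d, sg -> 0)
   this tends to root_im 0 0 / pi, which is the Marchenko-Pastur density. *)

From HB Require Import structures.
From mathcomp Require Import all_boot all_order all_algebra.
From mathcomp Require Import all_classical all_reals all_analysis.
From mathcomp Require Import complex.
From mathcomp Require Import measurable_realfun ring lra.
Import Order.TTheory GRing.Theory Num.Theory.
Import numFieldNormedType.Exports.
Local Open Scope classical_set_scope.
Local Open Scope ring_scope.
Import Normc.
Local Open Scope complex_scope.

Section ComplexNorm.
Context {R : rcfType}.
Implicit Types (z : R[i]) (k : R).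

Lemma normc_ge0 z : 0 <= normc z.
Proof. by case: z => p q; exact: sqrtr_ge0. Qed.

Lemma normc_gt0 {z} : z != 0 -> 0 < normc z.
Proof.
move=> z_neq0; rewrite lt_def normc_ge0 andbT.
by apply: contra z_neq0 => /eqP/eq0_normc ->.
Qed.

Lemma sqr_normcE z : normc z ^+ 2 = complex.Re z ^+ 2 + complex.Im z ^+ 2.
Proof. by case: z => u v; rewrite /normc sqr_sqrtr // addr_ge0 ?sqr_ge0. Qed.

Lemma normc_real k : normc k%:C = `|k|.
Proof. by rewrite /normc /= expr0n addr0 sqrtr_sqr. Qed.

Lemma normc_imaginary k : normc (0 +i* k) = `|k|.
Proof. by rewrite /normc /= expr0n add0r sqrtr_sqr. Qed.

Lemma le_normc_Re z : `|complex.Re z| <= normc z.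
Proof.
case: z => p q; rewrite /normc /= -sqrtr_sqr ler_sqrt ?addr_ge0 ?sqr_ge0 //.
by rewrite lerDl sqr_ge0.
Qed.

Lemma sqr_Im_sub_sqrtN_le z (D : R) :
  `|complex.Im z ^+ 2 - Num.sqrt (- D) ^+ 2| <= normc (z ^+ 2 - D%:C).
Proof.
case: z => h v; rewrite -[X in X <= _]sqrtr_sqr expr2 /normc /=.
rewrite ler_sqrt ?addr_ge0 ?sqr_ge0 // subr0 -expr2.
have [D_le0 | D_gt0] := lerP D 0.
  rewrite sqr_sqrtr ?oppr_ge0 //.
  have : 0 <= h ^+ 2 * (h ^+ 2 + 2 * v ^+ 2 - 2 * D).
    by apply: mulr_ge0; [exact: sqr_ge0 | nra].
  lra.
rewrite ltr0_sqrtr ?oppr_lt0 // expr0n subr0.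
have := sqr_ge0 (h ^+ 2 - D); have := sqr_ge0 (h * v).
have : 0 <= D * v ^+ 2 by rewrite mulr_ge0 ?sqr_ge0 ?ltW.
lra.
Qed.

End ComplexNorm.

Section StieltjesTransform.
Context {R : realType} (mu : probability R R).

Lemma bounded_integrable {f : R -> R} {B : R} :
  measurable_fun setT f -> (forall y, `|f y| <= B) -> mu.-integrable setT (EFin \o f).
Proof.
move=> mf fB; apply: measurable_bounded_integrable => //.
  exact: le_lt_trans (probability_le1 _ _) (ltry 1).
by exists B; split=> [|M BM y _]; [exact: num_real | exact: le_trans (fB y) (ltW BM)].
Qed.

Lemma Rintegral_sqr_le {f : R -> R} {B : R} :
  measurable_fun setT f -> (forall y, `|f y| <= B) ->
  (\int[mu]_y f y) ^+ 2 <= \int[mu]_y f y ^+ 2.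
Proof.
move=> mf fB; set m := \int[mu]_y f y.
have B0 : 0 <= B := le_trans (normr_ge0 _) (fB 0).
have int_f := bounded_integrable mf fB.
have int_f2 : mu.-integrable setT (EFin \o (fun y => f y ^+ 2)).
  apply: (bounded_integrable (B := B ^+ 2)); first exact: measurable_funX.
  by move=> y; rewrite normrX lerXn2r ?nnegrE.
have mf_lin : measurable_fun setT (fun y => 2 * m * f y).
  exact: measurable_funM (measurable_cst _) mf.
have int_mf : mu.-integrable setT (EFin \o (fun y => 2 * m * f y)).
  apply: (bounded_integrable (B := `|2 * m| * B)) => // y.
  by rewrite normrM ler_wpM2l.
have int_cst : mu.-integrable setT (EFin \o (fun _ => m ^+ 2)).
  exact: (bounded_integrable (B := `|m ^+ 2|)).
have int_lin : mu.-integrable setT (EFin \o (fun y => 2 * m * f y - m ^+ 2)).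
  apply: (bounded_integrable (B := `|2 * m| * B + `|m ^+ 2|)).
    exact: measurable_funB mf_lin (measurable_cst _).
  move=> y; apply: le_trans (ler_normB _ _) _.
  by rewrite lerD2r normrM ler_wpM2l.
have -> : \int[mu]_y f y ^+ 2 = \int[mu]_y (f y - m) ^+ 2 + m ^+ 2.
  have -> : \int[mu]_y (f y - m) ^+ 2 = \int[mu]_y (f y ^+ 2 - (2 * m * f y - m ^+ 2)).
    by apply: eq_Rintegral => y _; ring.
  have mu1 : fine (mu setT) = 1 by rewrite probability_setT.
  by rewrite !RintegralB // RintegralZl // Rintegral_cst // mu1 -/m; ring.
by rewrite lerDr; apply: Rintegral_ge0 => y _; exact: sqr_ge0.
Qed.

Lemma stieltjes_Complex (c e : R) : stieltjes mu (c +i* e) =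
  (\int[mu]_y ((c - y) / ((c - y) ^+ 2 + e ^+ 2)))
  +i* (\int[mu]_y (- (e / ((c - y) ^+ 2 + e ^+ 2)))).
Proof. by congr Complex; apply: eq_Rintegral => y _ /=; rewrite oppr0 addr0. Qed.

Lemma stieltjes_normc_le (z : R[i]) : 0 < complex.Im z ->
  complex.Im z * normc (stieltjes mu z) ^+ 2 <= - complex.Im (stieltjes mu z).
Proof.
case: z => c e; rewrite sqr_normcE stieltjes_Complex /= => e_gt0.
set den := fun y => (c - y) ^+ 2 + e ^+ 2.
have den_gt0 y : 0 < den y by rewrite ltr_wpDl ?sqr_ge0 ?exprn_gt0.
have den_cont : continuous den.
  have -> : den = horner (('X - c%:P) ^+ 2 + (e ^+ 2)%:P).
    by apply: funext => y; rewrite /den !hornerE sqrrB sqrrB; ring.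
  exact: continuous_horner.
have inv_den_meas : measurable_fun setT (fun y => (den y)^-1).
  apply: continuous_measurable_fun => y.
  by apply: continuousV; [rewrite gt_eqF | exact: den_cont].
set kr := fun y => (c - y) / den y.
set ki := fun y => - (e / den y).
have kr_meas : measurable_fun setT kr.
  by apply: measurable_funM inv_den_meas; apply: measurable_funB.
have ki_meas : measurable_fun setT ki.
  by apply: measurable_funN; apply: measurable_funM inv_den_meas.
have kr_le y : `|kr y| <= e^-1.
  rewrite /kr normrM normfV (gtr0_norm (den_gt0 y)) ler_pdivrMr // ler_pdivlMl //.
  have := real_normK (num_real (c - y)); have := normr_ge0 (c - y).
  by rewrite /den; nra.
have ki_le y : `|ki y| <= e^-1.
  rewrite /ki normrN normrM normfV (gtr0_norm e_gt0) (gtr0_norm (den_gt0 y)).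
  by rewrite ler_pdivrMr // ler_pdivlMl // /den lerDr sqr_ge0.
have kernel_sqr y : kr y ^+ 2 + ki y ^+ 2 = - e^-1 * ki y.
  have := den_gt0 y; rewrite /kr /ki /den => den_y_gt0.
  by field; rewrite !gt_eqF.
have int_sqr (k : R -> R) : measurable_fun setT k -> (forall y, `|k y| <= e^-1) ->
    mu.-integrable setT (EFin \o (fun y => k y ^+ 2)).
  move=> mk kB; apply: (bounded_integrable (B := e^-1 ^+ 2)); first exact: measurable_funX.
  by move=> y; rewrite normrX lerXn2r ?nnegrE ?invr_ge0 ?(ltW e_gt0) ?kB.
have -> : - (\int[mu]_y ki y) = e * ((\int[mu]_y kr y ^+ 2) + \int[mu]_y ki y ^+ 2).
  rewrite -RintegralD ?int_sqr // (eq_Rintegral _ (fun y _ => kernel_sqr y)).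
  rewrite RintegralZl //; last exact: bounded_integrable ki_meas ki_le.
  by field; rewrite !gt_eqF.
rewrite ler_pM2l //.
exact: lerD (Rintegral_sqr_le kr_meas kr_le) (Rintegral_sqr_le ki_meas ki_le).
Qed.
End StieltjesTransform.

Lemma cvg_at_right_of_lin_bound {R : realType} (f : R -> R) (l K : R) :
  (forall e, 0 < e -> `|f e - l| <= e * K) -> f e @[e --> 0^'+] --> l.
Proof.
move=> f_near; apply/cvgrPdist_le => eta eta_gt0.
have K1_gt0 : 0 < `|K| + 1 by rewrite ltr_pwDr.
near=> e.
have e_gt0 : 0 < e by near: e; exact: nbhs_right_gt.
have e_lt : e < eta / (`|K| + 1) by near: e; apply: nbhs_right_lt; rewrite divr_gt0.
rewrite distrC; apply: le_trans (f_near e e_gt0) _.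
move: e_lt; rewrite ltr_pdivlMr // => e_lt.
have : e * K <= e * (`|K| + 1) by rewrite ler_pM2l // ler_wpDr // ler_norm.
lra.
Unshelve. all: by end_near.
Qed.

Lemma cvg_div_pinfty {R : realType} (a : R) : (fun t => a / t) @ +oo --> 0.
Proof.
rewrite -(mulr0 a); apply: cvgMl_tmp; apply/gtr0_cvgV0; last exact: cvg_id.
exact: nbhs_pinfty_gt.
Qed.

Lemma near_pinfty_div_le1 {R : realType} (a c : R) : 0 <= a ->
  \forall t \near +oo, [/\ 0 < t, 0 <= a / t & a / t * c <= 1].
Proof.
move=> a_ge0; near=> t.
have : Num.max 0 (a * c) < t by near: t; apply: nbhs_pinfty_gt; exact: num_real.
rewrite gt_max => /andP[t_gt0 t_gt]; split => //; first by rewrite divr_ge0 // ltW.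
by rewrite mulrAC ler_pdivrMr // mul1r ltW.
Unshelve. all: by end_near.
Qed.

Section MPCubic.
Context {R : realType} (r x : R).
Hypotheses (r_gt0 : 0 < r) (r_le1 : r <= 1) (x_gt0 : 0 < x).

Definition mp_cubic (d : R) (g : R[i]) : R[i] :=
  x%:C * g * (1 - r%:C * g) ^+ 2
  - ((1 - r%:C * g) ^+ 2 + g * (1 - r%:C * g) + d%:C * g).

Definition cubic_lead := x * r ^+ 2.

Definition real_root (sg : R) := (1 + sg) / r.

(* [root_eq d sg = r * mp_cubic d (real_root sg)]. *)
Definition root_eq (d sg : R) :=
  sg * (1 + (1 - r + x) * sg + x * sg ^+ 2) - d * (1 + sg).

Definition quad_center (sg : R) := - (real_root sg / 2 + (1 - r - 2 * x) / (2 * r * x)).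

Definition quad_disc (d sg : R) := quad_center sg ^+ 2
  - (real_root sg ^+ 2 + (1 - r - 2 * x) / (r * x) * real_root sg
     + (x + 2 * r - 1 - d) / (x * r ^+ 2)).

Definition quad_factor (d sg : R) (g : R[i]) :=
  (g - (quad_center sg)%:C) ^+ 2 - (quad_disc d sg)%:C.

Definition root_im (d sg : R) := Num.sqrt (- quad_disc d sg).

Lemma mp_cubic_factor (d sg : R) (g : R[i]) : mp_cubic d g =
  cubic_lead%:C * (g - (real_root sg)%:C) * quad_factor d sg g + (root_eq d sg / r)%:C.
Proof.
have r_neq0 : r != 0 by rewrite gt_eqF.
have x_neq0 : x != 0 by rewrite gt_eqF.
rewrite /mp_cubic /quad_factor /quad_disc /quad_center /cubic_lead /root_eq /real_root.
case: g => u v; rewrite !expr2; apply/eqP; rewrite eq_complex /=.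
by apply/andP; split; apply/eqP; field; rewrite r_neq0 x_neq0.
Qed.

Lemma root_eq_solvable {d : R} : 0 <= d -> d * (3 + x) <= 1 ->
  exists2 sg, d / 2 <= sg <= 3 * d / 2 & root_eq d sg = 0.
Proof.
move=> d_ge0 d_small.
have dx_ge0 : 0 <= d * x by rewrite mulr_ge0 // ltW.
have dx_le1 : d * x <= 1 by lra.
have d_le13 : 3 * d <= 1 by lra.
have root_eq_cont : continuous (root_eq d).
  have -> : root_eq d = horner (x%:P * 'X^3 + (1 - r + x)%:P * 'X^2 + (1 - d)%:P * 'X - d%:P).
    apply: funext => sg; rewrite /root_eq !(hornerD, hornerN, hornerCM, hornerC, hornerXn, hornerX).
    ring.
  exact: continuous_horner.
have root_eq_lo : root_eq d (d / 2) <= 0.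
  have -> : root_eq d (d / 2) = - d / 2 - d ^+ 2 / 2 + (1 - r) * d ^+ 2 / 4
    + (d * x) * d / 4 + d ^+ 2 * (d * x) / 8 by rewrite /root_eq; field.
  have : (1 - r) * d ^+ 2 <= d ^+ 2 by rewrite ler_piMl ?sqr_ge0 ?gerBl ?ltW.
  have : 0 <= d * (1 - d * x) by rewrite mulr_ge0 // subr_ge0.
  have : 0 <= d ^+ 2 * (1 - d * x) by rewrite mulr_ge0 ?sqr_ge0 // subr_ge0.
  have := sqr_ge0 d; lra.
have root_eq_hi : 0 <= root_eq d (3 * d / 2).
  have -> : root_eq d (3 * d / 2) = d / 2 - 3 * d ^+ 2 / 2 + (1 - r) * d ^+ 2 * 9 / 4
    + x * d ^+ 2 * 9 / 4 + x * d ^+ 3 * 27 / 8 by rewrite /root_eq; field.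
  have : 0 <= d * (1 - 3 * d) by rewrite mulr_ge0 // subr_ge0.
  have : 0 <= (1 - r) * d ^+ 2 by rewrite mulr_ge0 ?sqr_ge0 // subr_ge0.
  have : 0 <= x * d ^+ 2 by rewrite mulr_ge0 ?sqr_ge0 // ltW.
  have : 0 <= x * d ^+ 3 by rewrite mulr_ge0 ?exprn_ge0 // ltW.
  lra.
have [|||sg sg_in sg_root] := @IVT _ (root_eq d) (d / 2) (3 * d / 2) 0.
- lra.
- by apply: continuous_subspaceT => sg; exact: root_eq_cont.
- by rewrite ge_min root_eq_lo le_max root_eq_hi orbT.
by exists sg; rewrite // -in_itv.
Qed.

Definition g_bound := 2 / x + (2 + 4 / x) / r.

Lemma le_g_bound (G S d : R) : 0 <= G -> 0 <= S -> 0 <= d <= 1 ->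
  x * G * S ^+ 2 <= S ^+ 2 + G * S + d * G -> r * G <= 1 + S -> G <= g_bound.
Proof.
move=> G_ge0 S_ge0 /andP[d_ge0 d_le1] cubic_le rG_le.
have x4_ge0 : 0 <= 4 / x by rewrite divr_ge0 // ltW.
have [G_le | G_gt] := lerP G (2 / x).
  by apply: le_trans G_le _; rewrite lerDl divr_ge0 ?ltW //; lra.
have xG_gt2 : 2 < x * G by rewrite mulrC -ltr_pdivrMr.
have S_le : S <= 1 + 4 / x.
  rewrite leNgt; apply/negP => S_gt.
  have xS_gt4 : 4 < x * S.
    by rewrite mulrC -ltr_pdivrMr //; apply: le_lt_trans S_gt; rewrite lerDr.
  have : 0 < G * S * (x * S - 4) by rewrite !mulr_gt0 ?subr_gt0 //; lra.
  have : d * G <= G * S by rewrite mulrC ler_wpM2l //; lra.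
  have : 2 * S ^+ 2 < x * G * S ^+ 2 by rewrite ltr_pM2r ?exprn_gt0 //; lra.
  lra.
have : G <= (1 + S) / r by rewrite ler_pdivlMr // mulrC.
move/le_trans; apply; rewrite /g_bound -[X in X <= _]add0r.
by apply: lerD; [rewrite divr_ge0 ?ltW | rewrite ler_pM2r ?invr_gt0 //; lra].
Qed.

Lemma cubic_lead_gt0 : 0 < cubic_lead.
Proof. by rewrite mulr_gt0 ?exprn_gt0. Qed.

Definition im_err_const := 4 * r * g_bound * (1 + r * g_bound) / cubic_lead.

Section Estimate.
Context {d w sg u v : R}.
Let g : R[i] := u +i* v.
Let s : R[i] := 1 - r%:C * g.
Hypotheses (w_gt0 : 0 < w) (d_ge0 : 0 <= d) (d_le1 : d <= 1).
Hypotheses (sg_ge : d / 2 <= sg) (sg_le : sg <= 3 * d / 2) (sg_root : root_eq d sg = 0).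
Hypotheses (g_neq0 : g != 0) (s_neq0 : s != 0).
Hypothesis g_eq : (x +i* w) * g * s ^+ 2 = s ^+ 2 + g * s + d%:C * g.
Hypothesis g_im : w * normc g ^+ 2 <= - v.

Lemma Im_g_lt0 : v < 0.
Proof.
by rewrite -oppr_gt0; exact: lt_le_trans (mulr_gt0 w_gt0 (exprn_gt0 2 (normc_gt0 g_neq0))) g_im.
Qed.

Lemma s_ReIm : s = (1 - r * u) +i* (- (r * v)).
Proof. by apply/eqP; rewrite eq_complex /= !mul0r subr0 addr0 sub0r !eqxx. Qed.

Lemma le_normc_s_add_d : d <= normc (s + d%:C).
Proof.
set p := 1 - r * u.
set Ng := u ^+ 2 + v ^+ 2; set Ns := p ^+ 2 + (r * v) ^+ 2.
have im_id : (w * Ng + v) * Ns ^+ 2 = r * v * Ng * (Ns + 2 * d * p).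
  (* the imaginary part of [g_eq] times conj(g) conj(s)^2 *)
  have := congr1 (fun z => complex.Im (z * (u -i* v) * (p +i* (r * v)) * (p +i* (r * v)))) g_eq.
  rewrite s_ReIm !expr2 /=.
  move/eqP; rewrite -subr_eq0 => /eqP h.
  apply/eqP; rewrite -subr_eq0; apply/eqP; rewrite -h /Ng /Ns /p; ring.
have Ng_gt0 : 0 < Ng by rewrite /Ng -(sqr_normcE g) exprn_gt0 // normc_gt0.
have wNg_le : w * Ng + v <= 0 by move: g_im; rewrite sqr_normcE /Ng /=; lra.
have : r * v * Ng * (Ns + 2 * d * p) <= 0.
  by rewrite -im_id mulr_le0_ge0 ?sqr_ge0.
rewrite nmulr_rle0 => [sd_ge0|]; last by rewrite pmulr_llt0 // pmulr_rlt0 // Im_g_lt0.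
rewrite -ler_sqr ?nnegrE ?normc_ge0 // sqr_normcE s_ReIm /= addr0 sqrrN.
by move: sd_ge0; rewrite /Ns /p; nra.
Qed.

Lemma normc_s_le : normc s <= 4 * normc (s + sg%:C).
Proof.
have sd_le : normc (s + d%:C) <= normc (s + sg%:C) + `|d - sg|.
  have -> : s + d%:C = (s + sg%:C) + (d - sg)%:C by rewrite rmorphB /=; ring.
  by rewrite -normc_real le_normcD.
have s_le : normc s <= normc (s + d%:C) + d.
  rewrite -{1}(addrK d%:C s); apply: le_trans (le_normcD _ _) _.
  by rewrite normcN normc_real ger0_norm.
have : `|d - sg| <= d / 2.
  by rewrite ler_norml; apply/andP; split; move: sg_ge sg_le; lra.
have := le_normc_s_add_d; lra.
Qed.

Lemma normc_g_le : normc g <= g_bound.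
Proof.
have Ng_ge0 := normc_ge0 g; have Ns_ge0 := normc_ge0 s.
apply: (le_g_bound _ (normc s) d) => //; first by apply/andP.
  have x_le : x <= normc (x +i* w) by have := le_normc_Re (x +i* w); rewrite gtr0_norm.
  apply: le_trans (_ : normc ((x +i* w) * g * s ^+ 2) <= _).
    by rewrite !normcM -expr2 ler_wpM2r ?sqr_ge0 // ler_wpM2r.
  rewrite g_eq; apply: le_trans (le_normcD _ _) _.
  rewrite normcM normc_real ger0_norm // lerD2r.
  by apply: le_trans (le_normcD _ _) _; rewrite !normcM -expr2.
have -> : r * normc g = normc (1 - s).
  by rewrite /s opprB addrC subrK normcM normc_real gtr0_norm.
by apply: le_trans (le_normcD _ _) _; rewrite normcN normc1.
Qed.

Lemma normc_sub_real_root : r * normc (g - (real_root sg)%:C) = normc (s + sg%:C).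
Proof.
have -> : s + sg%:C = - (r%:C * (g - (real_root sg)%:C)).
  rewrite /s /real_root; apply/eqP; rewrite eq_complex /=.
  by apply/andP; split; apply/eqP; field; rewrite gt_eqF.
by rewrite normcN normcM normc_real gtr0_norm.
Qed.

Lemma normc_mp_cubic_factor : w * normc g * normc s ^+ 2
  = cubic_lead * normc (g - (real_root sg)%:C) * normc (quad_factor d sg g).
Proof.
have cubic_g : mp_cubic d g = - (0 +i* w) * g * s ^+ 2.
  have xw : x +i* w = x%:C + (0 +i* w).
    by apply/eqP; rewrite eq_complex /= addr0 add0r !eqxx.
  by have := g_eq; rewrite xw /mp_cubic -/s => <-; ring.
have := congr1 (@normc R) (mp_cubic_factor d sg g).
rewrite sg_root mul0r addr0 cubic_g !normcM normcN -expr2 normc_imaginary normc_real.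
by rewrite !gtr0_norm ?cubic_lead_gt0.
Qed.

Lemma normc_quad_factor_le :
  cubic_lead * normc (quad_factor d sg g) <= 4 * r * w * normc g * normc s.
Proof.
rewrite -(ler_pM2r (normc_gt0 s_neq0)).
have -> : 4 * r * w * normc g * normc s * normc s = 4 * r * (w * normc g * normc s ^+ 2).
  by ring.
rewrite normc_mp_cubic_factor.
set N1 := normc (g - _); set NQ := normc (quad_factor d sg g).
have -> : 4 * r * (cubic_lead * N1 * NQ) = cubic_lead * NQ * (4 * (r * N1)) by ring.
rewrite ler_wpM2l ?normc_sub_real_root ?normc_s_le //.
by rewrite mulr_ge0 ?normc_ge0 // ltW // cubic_lead_gt0.
Qed.

Lemma Im_sqr_sub_root_im_le : `|v ^+ 2 - root_im d sg ^+ 2| <= w * im_err_const.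
Proof.
have := sqr_Im_sub_sqrtN_le (g - (quad_center sg)%:C) (quad_disc d sg).
have -> : complex.Im (g - (quad_center sg)%:C) = v by rewrite /= subr0.
rewrite -/(quad_factor d sg g) -/(root_im d sg) => /le_trans; apply.
have a3_gt0 := cubic_lead_gt0.
have -> : w * im_err_const = 4 * r * w * (g_bound * (1 + r * g_bound)) / cubic_lead.
  by rewrite /im_err_const; field; rewrite gt_eqF.
rewrite ler_pdivlMr // [_ * cubic_lead]mulrC; apply: le_trans normc_quad_factor_le _.
have Ns_le : normc s <= 1 + r * g_bound.
  apply: le_trans (le_normcD _ _) _; rewrite normc1 normcN normcM normc_real gtr0_norm //.
  by rewrite lerD2l ler_pM2l // normc_g_le.
rewrite -mulrA ler_wpM2l ?mulr_ge0 ?(ltW r_gt0) ?(ltW w_gt0) //.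
by apply: ler_pM; rewrite ?normc_ge0 ?normc_g_le.
Qed.

End Estimate.

Lemma mp_equation_scaled {a t e : R} {G : R[i]} : 0 < t -> 0 < e ->
  (t * x) +i* e = G^-1 + t%:C / (1 - (r * t)%:C * G) + a%:C / (1 - (r * t)%:C * G) ^+ 2 ->
  let g := t%:C * G in let s := 1 - r%:C * g in
  [/\ G != 0, s != 0 & (x +i* (e / t)) * g * s ^+ 2 = s ^+ 2 + g * s + (a / t)%:C * g].
Proof.
move=> t_gt0 e_gt0 G_eq g s.
have s_E : s = 1 - (r * t)%:C * G by rewrite /s /g rmorphM /= mulrA.
(* As 0^-1 = 0, both G = 0 and s = 0 would make the right-hand side of [G_eq] real. *)
have G_neq0 : G != 0.
  apply/negP => /eqP G0; move: G_eq; rewrite G0 mulr0 subr0 invr0 expr1n !divr1 add0r.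
  by move/(congr1 (@complex.Im R)); rewrite /= addr0 => e0; move: e_gt0; rewrite e0 ltxx.
have s_neq0 : s != 0.
  apply/negP => /eqP s0; move: G_eq; rewrite -s_E s0 invr0 expr0n /= invr0 !mulr0 !addr0.
  have -> : G^-1 = (r * t)%:C.
    by apply: (mulIf G_neq0); rewrite mulVf //; apply/eqP; rewrite -subr_eq0 -s_E s0.
  by move/(congr1 (@complex.Im R)) => /= e0; move: e_gt0; rewrite e0 ltxx.
split=> //.
have x_scaled : (x +i* (e / t)) * t%:C = (t * x) +i* e.
  apply/eqP; rewrite eq_complex /= mulr0 subr0 mulr0 add0r divfK ?(gt_eqF t_gt0) //.
  by rewrite [x * t]mulrC !eqxx.
have a_scaled : (a / t)%:C * g = a%:C * G.
  by rewrite /g mulrA -rmorphM /= divfK ?(gt_eqF t_gt0).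
rewrite a_scaled /g mulrA x_scaled G_eq s_E.
by field; rewrite G_neq0 andbT -mulrA; exact: s_neq0.
Qed.

Lemma mp3_stieltjes_Im_bounds (a t e sg : R) (G : R[i] -> R[i]) :
  MP3_stieltjes r t a G -> 0 < t -> 0 < e ->
  0 <= a / t <= 1 -> a / t / 2 <= sg <= 3 * (a / t) / 2 -> root_eq (a / t) sg = 0 ->
  complex.Im (G ((t * x) +i* e)) < 0 /\
  `|(t * complex.Im (G ((t * x) +i* e))) ^+ 2 - root_im (a / t) sg ^+ 2|
    <= e / t * im_err_const.
Proof.
move=> [mu G_mp] t_gt0 e_gt0 /andP[d_ge0 d_le1] /andP[sg_ge sg_le] sg_root.
have [G_st G_eq] := G_mp ((t * x) +i* e) e_gt0.
have [G_neq0 s_neq0 g_eq] := mp_equation_scaled t_gt0 e_gt0 G_eq.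
have G_im := stieltjes_normc_le mu ((t * x) +i* e) e_gt0; rewrite -G_st /= in G_im.
move: (G _) G_st G_eq G_neq0 s_neq0 g_eq G_im => [p q] _ _ G_neq0 s_neq0 g_eq G_im /=.
have gE : t%:C * (p +i* q) = (t * p) +i* (t * q).
  by apply/eqP; rewrite eq_complex /= !mul0r subr0 addr0 !eqxx.
rewrite gE in s_neq0 g_eq.
have e_t_gt0 : 0 < e / t by rewrite divr_gt0.
have g_im : e / t * normc ((t * p) +i* (t * q)) ^+ 2 <= - (t * q).
  rewrite -gE normcM normc_real gtr0_norm // exprMn -mulrN.
  have -> : e / t * (t ^+ 2 * normc (p +i* q) ^+ 2) = t * (e * normc (p +i* q) ^+ 2).
    by field; rewrite gt_eqF.
  by rewrite ler_pM2l.
have g_neq0 : (t * p) +i* (t * q) != 0 by rewrite -gE mulf_neq0 // fmorph_eq0 gt_eqF.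
split; first by rewrite -(pmulr_rlt0 _ t_gt0) (Im_g_lt0 e_t_gt0 g_neq0 g_im).
exact: Im_sqr_sub_root_im_le e_t_gt0 d_ge0 d_le1 sg_ge sg_le sg_root g_neq0 s_neq0 g_eq g_im.
Qed.

Lemma mp_density_root_im : mp_density r x = root_im 0 0 / pi.
Proof.
have r_neq0 : r != 0 by rewrite gt_eqF.
have x_neq0 : x != 0 by rewrite gt_eqF.
have pi_neq0 : (pi : R) != 0 by rewrite gt_eqF // pi_gt0.
set sr := Num.sqrt r.
have r_sqr : r = sr ^+ 2 by rewrite sqr_sqrtr // ltW.
set P := (x - (1 - sr) ^+ 2) * ((1 + sr) ^+ 2 - x).
have disc_P : - quad_disc 0 0 = (2 * r * x)^-1 ^+ 2 * P.
  have -> : P = 4 * r * x - (1 - r - x) ^+ 2 by rewrite [in RHS]r_sqr /P; ring.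
  by rewrite /quad_disc /quad_center /real_root; field; rewrite r_neq0 x_neq0.
have c_gt0 : 0 < (2 * r * x)^-1 by rewrite invr_gt0 !mulr_gt0.
have -> : root_im 0 0 = (2 * r * x)^-1 * Num.sqrt P.
  by rewrite /root_im disc_P sqrtrM ?sqr_ge0 // sqrtr_sqr gtr0_norm.
rewrite /mp_density -/sr -/P; case: ifP => [_ | out].
  by move: (pi : R) pi_neq0 => p p_neq0; field; rewrite p_neq0 x_neq0 r_neq0.
suff P_le0 : P <= 0 by rewrite ler0_sqrtr // mulr0 mul0r.
have sr_ge0 : 0 <= sr by exact: sqrtr_ge0.
have edges : (1 - sr) ^+ 2 <= (1 + sr) ^+ 2 by nra.
move/negbT: out; rewrite negb_and -!leNgt => /orP[] x_out.
  by rewrite /P mulr_le0_ge0 // ?subr_le0 ?subr_ge0 // (le_trans x_out).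
by rewrite /P mulr_ge0_le0 // ?subr_le0 ?subr_ge0 // (le_trans edges).
Qed.

Lemma root_eq_choice : exists sg : R -> R, forall d, 0 <= d -> d * (3 + x) <= 1 ->
  d / 2 <= sg d <= 3 * d / 2 /\ root_eq d (sg d) = 0.
Proof.
have /choice[sg sg_spec] : forall d, exists s,
    0 <= d -> d * (3 + x) <= 1 -> d / 2 <= s <= 3 * d / 2 /\ root_eq d s = 0.
  move=> d; have [d_ge0 | d_lt0] := lerP 0 d; last by exists 0.
  have [d_small | d_big] := lerP (d * (3 + x)) 1; last by exists 0.
  by have [s s_in s_root] := root_eq_solvable d_ge0 d_small; exists s.
by exists sg.
Qed.

Lemma quad_disc_cvg {T : Type} {F : set_system T} {FF : Filter F} {d sg : T -> R} :
  d @ F --> 0 -> sg @ F --> 0 ->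
  (fun t => quad_disc (d t) (sg t)) @ F --> quad_disc 0 0.
Proof.
move=> d_cvg sg_cvg.
have root_cvg : (fun t => real_root (sg t)) @ F --> real_root 0.
  by apply: cvgMr_tmp; apply: cvgD => //; exact: cvg_cst.
have center_cvg : (fun t => quad_center (sg t)) @ F --> quad_center 0.
  by apply: cvgN; apply: cvgD; [exact: cvgMr_tmp | exact: cvg_cst].
apply: cvgB; first by rewrite expr2; exact: cvgM.
apply: cvgD; first apply: cvgD.
- by rewrite expr2; exact: cvgM.
- exact: cvgMl_tmp.
- by apply: cvgMr_tmp; apply: cvgB => //; exact: cvg_cst.
Qed.

Lemma root_im_cvg {T : Type} {F : set_system T} {FF : Filter F} {d sg : T -> R} :
  d @ F --> 0 -> sg @ F --> 0 ->
  (fun t => root_im (d t) (sg t)) @ F --> root_im 0 0.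
Proof.
move=> d_cvg sg_cvg.
have disc_cvg : (fun t => - quad_disc (d t) (sg t)) @ F --> - quad_disc 0 0.
  by apply: cvgN; exact: quad_disc_cvg.
exact: cvg_comp disc_cvg (@sqrt_continuous R _).
Qed.

Lemma mp3_density_cvg (a t sg : R) (G : R[i] -> R[i]) :
  MP3_stieltjes r t a G -> 0 < t ->
  0 <= a / t <= 1 -> a / t / 2 <= sg <= 3 * (a / t) / 2 -> root_eq (a / t) sg = 0 ->
  (fun e => - pi^-1 * complex.Im (G ((t * x) +i* e))) @ 0^'+
    --> root_im (a / t) sg / (pi * t).
Proof.
move=> G_mp t_gt0 d_in sg_in sg_root.
have pi_neq0 : (pi : R) != 0 by rewrite gt_eqF // pi_gt0.
set b := root_im (a / t) sg.
set ImG := fun e => complex.Im (G ((t * x) +i* e)).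
have near e : 0 < e -> ImG e < 0 /\
    `|(t * ImG e) ^+ 2 - b ^+ 2| <= e / t * im_err_const.
  by move=> e_gt0; exact: mp3_stieltjes_Im_bounds.
have sqr_cvg : (fun e => (t * ImG e) ^+ 2) @ 0^'+ --> b ^+ 2.
  apply: (@cvg_at_right_of_lin_bound _ _ _ (im_err_const / t)) => e e_gt0.
  by have [_ bound] := near e e_gt0; rewrite mulrA mulrAC.
have := cvg_comp _ _ sqr_cvg (@sqrt_continuous R (b ^+ 2)).
rewrite sqrtr_sqr ger0_norm ?sqrtr_ge0 // => abs_cvg.
rewrite [b / _]mulrC.
apply: (@cvg_trans _ ((fun e => (pi * t)^-1 * Num.sqrt ((t * ImG e) ^+ 2)) @ 0^'+));
  last exact: cvgMl_tmp.
apply: near_eq_cvg; near=> e.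
have e_gt0 : 0 < e by near: e; exact: nbhs_right_gt.
have [ImG_lt0 _] := near e e_gt0.
rewrite /= sqrtr_sqr ltr0_norm ?pmulr_rlt0 // invfM.
by move: (pi : R) pi_neq0 => p p_neq0; field; rewrite p_neq0 gt_eqF.
Unshelve. all: by end_near.
Qed.

End MPCubic.

Theorem proposition1p4 (R : realType) (r a : R) (G : R -> R[i] -> R[i]) :
  0 < r -> r <= 1 -> 0 <= a ->
  (forall t : R, 0 < t -> MP3_stieltjes r t a (G t)) ->
  forall x : R, 0 < x ->
  exists rho : R -> R,
    (\forall t \near +oo,
       (fun eps : R => - pi^-1 * complex.Im (G t (Complex (t * x) eps)))
         @ 0^'+ --> rho t) /\
    (fun t : R => t * rho t) @ +oo --> mp_density r x.
Proof.
move=> r_gt0 r_le1 a_ge0 G_mp x x_gt0.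
have [sg sg_spec] := root_eq_choice r x r_gt0 r_le1 x_gt0.
have near_t : \forall t \near +oo, [/\ 0 < t, 0 <= a / t <= 1,
    a / t / 2 <= sg (a / t) <= 3 * (a / t) / 2 & root_eq r x (a / t) (sg (a / t)) = 0].
  have := near_pinfty_div_le1 a (3 + x) a_ge0; apply: filterS => t [t_gt0 d_ge0 d_le].
  have [sg_in sg_root] := sg_spec _ d_ge0 d_le; split=> //.
  by rewrite d_ge0 (le_trans _ d_le) // ler_peMr //; lra.
exists (fun t => root_im r x (a / t) (sg (a / t)) / (pi * t)); split.
  apply: filterS near_t => t [t_gt0 d_in sg_in sg_root].
  by apply: mp3_density_cvg => //; exact: G_mp.
have sg_cvg : (fun t => sg (a / t)) @ +oo --> 0.
  apply: (@squeeze_cvgr _ _ _ _ (fun t => a / t / 2) (fun t => 3 * (a / t) / 2)).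
  - by apply: filterS near_t => t [].
  - by rewrite -(mul0r 2^-1); apply: cvgMr_tmp; exact: cvg_div_pinfty.
  - rewrite (_ : 0 = 3 * 0 / 2); last by rewrite mulr0 mul0r.
    by apply: cvgMr_tmp; apply: cvgMl_tmp; exact: cvg_div_pinfty.
rewrite mp_density_root_im //.
apply: (@cvg_trans _ ((fun t => root_im r x (a / t) (sg (a / t)) / pi) @ +oo));
  last exact: cvgMr_tmp (root_im_cvg r x (cvg_div_pinfty a) sg_cvg).
apply: near_eq_cvg; apply: filterS near_t => t [t_gt0 _ _ _] /=.
by rewrite invfM mulrCA [t * _]mulrCA mulfV ?gt_eqF // mulr1.
Qed.
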